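(* There exists a unique algebra homomorphism $\sharp:\Re\to U(\mathfrak{sl}_2)$ that sends \[ A\mapsto \frac{(E+F-2)(E+F+2)}{16},\quad B\mapsto \frac{(H-2)(H+2)}{16},\quad C\mapsto \frac{(\mathbf i E-\mathbf i F-2)(\mathbf i E-\mathbf i F+2)}{16},\quad \Delta\mapsto \frac{(H+2)F^2-(H-2)E^2}{64}. \] Moreover $\sharp(\alpha)=\sharp(\beta)=\sharp(\gamma)=0$ and $\sharp(\delta)=\frac{\Lambda-6}{8}$.
   Context: All algebras are unital associative over $\mathbb C$, homomorphisms are unital, $[x,y]=xy-yx$, and $\mathbf i=\sqrt{-1}$. $U(\mathfrak{sl}_2)$ is the algebra generated by $E,F,H$ with relations $[H,E]=2E$, $[H,F]=-2F$, $[E,F]=H$; its Casimir element is $\Lambda=EF+FE+\frac{H^2}{2}$. The universal Racah algebra $\Re$ is the algebra generated by $A,B,C,\Delta$ with relations $[A,B]=[B,C]=[C,A]=2\Delta$ and such that each of $[A,\Delta]+AC-BA$, $[B,\Delta]+BA-CB$, $[C,\Delta]+CB-AC$ is central in $\Re$. Denote these three central elements by $\alpha,\beta,\gamma$ respectively, and let $\delta=A+B+C$ (which is central in $\Re$). *)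

From HB Require Import structures.
From mathcomp Require Import all_boot all_order all_algebra.
From mathcomp Require Import complex.
From mathcomp Require Import Rstruct.
Set Implicit Arguments. Unset Strict Implicit. Unset Printing Implicit Defensive.
Import Order.TTheory GRing.Theory Num.Theory.
Local Open Scope ring_scope.

Notation Cx := (complex Rdefinitions.R).

Definition commr {T : pzRingType} (x y : T) : T := x * y - y * x.

Definition sl2_rel (T : algType Cx) (e f h : T) : Prop :=
  [/\ commr h e = e *+ 2, commr h f = - (f *+ 2) & commr e f = h].

Definition unique_hom_on {S T : algType Cx} (P : (S -> T) -> Prop)
  (phi : {lrmorphism S -> T}) : Prop :=
  P phi /\ forall psi : {lrmorphism S -> T}, P psi -> forall x, psi x = phi x.

(* (U, E, F, H) is the universal enveloping algebra U(sl_2): generated by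
   E, F, H subject to the sl_2 relations (universal property of the
   presentation). *)
Definition is_Usl2 (U : algType Cx) (E F H : U) : Prop :=
  sl2_rel E F H /\
  forall (T : algType Cx) (e f h : T), sl2_rel e f h ->
    exists phi : {lrmorphism U -> T},
      unique_hom_on (fun g => [/\ g E = e, g F = f & g H = h]) phi.

Definition Casimir {U : algType Cx} (E F H : U) : U :=
  E * F + F * E + (2^-1 : Cx) *: (H ^+ 2).

Definition racah_alpha {T : pzRingType} (a b c d : T) : T := commr a d + a * c - b * a.
Definition racah_beta  {T : pzRingType} (a b c d : T) : T := commr b d + b * a - c * b.
Definition racah_gamma {T : pzRingType} (a b c d : T) : T := commr c d + c * b - a * c.
Definition racah_delta {T : pzRingType} (a b c d : T) : T := a + b + c.

Definition comm_gens {T : pzRingType} (x a b c d : T) : Prop :=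
  [/\ commr x a = 0, commr x b = 0, commr x c = 0 & commr x d = 0].

Definition racah_rel (T : algType Cx) (a b c d : T) : Prop :=
  [/\ commr a b = d *+ 2, commr b c = d *+ 2 & commr c a = d *+ 2] /\
  [/\ comm_gens (racah_alpha a b c d) a b c d,
      comm_gens (racah_beta a b c d) a b c d &
      comm_gens (racah_gamma a b c d) a b c d].

(* (Re, A, B, C, D) is the universal Racah algebra: generated by A, B, C, D
   subject to the Racah relations (universal property of the presentation). *)
Definition is_Racah (Re : algType Cx) (A B C D : Re) : Prop :=
  racah_rel A B C D /\
  forall (T : algType Cx) (a b c d : T), racah_rel a b c d ->
    exists phi : {lrmorphism Re -> T},
      unique_hom_on (fun g => [/\ g A = a, g B = b, g C = c & g D = d]) phi.

From HB Require Import structures.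
From mathcomp Require Import all_boot all_order all_algebra.
From mathcomp Require Import complex Rstruct ring.
Set Implicit Arguments. Unset Strict Implicit. Unset Printing Implicit Defensive.
Import GRing.Theory.
Local Open Scope ring_scope.
Local Open Scope complex_scope.

(* Put a = (E + F)^2 - 4, b = H^2 - 4, c = -(E - F)^2 - 4 and d = (H + 2)F^2 - (H - 2)E^2.
   Expanding (y - 2)(y + 2) = y^2 - 4 and (i y)^2 = -y^2, the prescribed images of A, B, C,
   Delta are a/16, b/16, c/16 and d/64.  In U(sl_2) one has [a,b] = [b,c] = [c,a] = 8d and
   [a,d] = 4(ba - ac) together with its cyclic shifts; after rescaling these are exactly the
   Racah relations with alpha, beta, gamma sent to 0, and moreover a + b + c = 2 Lambda - 12.
   The identities are verified by reflection, normal-ordering words into the PBW basis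
   F^i H^j E^k.  The universal property of the Racah algebra then provides sharp and its
   uniqueness. *)

Inductive sl2_letter := LF | LH | LE.

Definition sl2_letter_eqb (x y : sl2_letter) : bool :=
  match x, y with LF, LF | LH, LH | LE, LE => true | _, _ => false end.

Lemma sl2_letter_eqP : Equality.axiom sl2_letter_eqb.
Proof. by case; case; constructor. Qed.

HB.instance Definition _ := hasDecEq.Build sl2_letter sl2_letter_eqP.

Definition sl2_monomial := (int * seq sl2_letter)%type.

(* HF = FH - 2F, EF = FE + H and EH = HE - 2E put adjacent letters in the order F, H, E. *)
Definition straighten (x y : sl2_letter) (w : seq sl2_letter) :
    option (seq sl2_monomial) :=
  match x, y with
  | LH, LF => Some [:: (1, [:: LF, LH & w]); (-2, LF :: w)]
  | LE, LF => Some [:: (1, [:: LF, LE & w]); (1, LH :: w)]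
  | LE, LH => Some [:: (1, [:: LH, LE & w]); (-2, LE :: w)]
  | _, _ => None
  end.

Fixpoint straighten_step (w : seq sl2_letter) : option (seq sl2_monomial) :=
  match w with
  | x :: (y :: r) as t =>
      if straighten x y r is Some q then Some q
      else omap (map (fun m => (m.1, x :: m.2))) (straighten_step t)
  | _ => None
  end.

Definition scale_poly (c : int) (p : seq sl2_monomial) : seq sl2_monomial :=
  [seq (c * m.1, m.2) | m <- p].

(* Running out of fuel leaves a word unreduced, which can make [sl2_expr_eq] fail to
   apply but never makes it unsound. *)
Fixpoint normal_word (n : nat) (w : seq sl2_letter) : seq sl2_monomial :=
  if n is n'.+1 then
    if straighten_step w is Some q then
      flatten [seq scale_poly m.1 (normal_word n' m.2) | m <- q]
    else [:: (1, w)]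
  else [:: (1, w)].

Fixpoint add_monomial (m : sl2_monomial) (p : seq sl2_monomial) :=
  if p is m' :: p' then
    if m.2 == m'.2 then (m.1 + m'.1, m.2) :: p' else m' :: add_monomial m p'
  else [:: m].

Definition normal_poly (n : nat) (p : seq sl2_monomial) : seq sl2_monomial :=
  [seq m <- foldr add_monomial [::]
              (flatten [seq scale_poly m.1 (normal_word n m.2) | m <- p])
     | m.1 != 0].

Definition mul_poly (p q : seq sl2_monomial) : seq sl2_monomial :=
  [seq (m1.1 * m2.1, m1.2 ++ m2.2) | m1 <- p, m2 <- q].

Inductive sl2_expr :=
  | XLetter of sl2_letter | XConst of int
  | XAdd of sl2_expr & sl2_expr | XOpp of sl2_expr | XMuln of sl2_expr & nat
  | XMul of sl2_expr & sl2_expr.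

Fixpoint poly_of_expr (e : sl2_expr) : seq sl2_monomial :=
  match e with
  | XLetter l => [:: (1, [:: l])]
  | XConst z => [:: (z, [::])]
  | XAdd a b => poly_of_expr a ++ poly_of_expr b
  | XOpp a => scale_poly (-1) (poly_of_expr a)
  | XMuln a n => scale_poly n (poly_of_expr a)
  | XMul a b => mul_poly (poly_of_expr a) (poly_of_expr b)
  end.

Section Sl2Normalisation.
Variables (R : pzRingType) (E F H : R).

Definition eval_letter (l : sl2_letter) : R :=
  match l with LF => F | LH => H | LE => E end.

Definition eval_word (w : seq sl2_letter) : R := \prod_(l <- w) eval_letter l.

Definition eval_poly (p : seq sl2_monomial) : R := \sum_(m <- p) eval_word m.2 *~ m.1.

Fixpoint eval_expr (e : sl2_expr) : R :=
  match e with
  | XLetter l => eval_letter l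
  | XConst z => 1 *~ z
  | XAdd a b => eval_expr a + eval_expr b
  | XOpp a => - eval_expr a
  | XMuln a n => eval_expr a *+ n
  | XMul a b => eval_expr a * eval_expr b
  end.

Lemma eval_word_cons l w : eval_word (l :: w) = eval_letter l * eval_word w.
Proof. exact: big_cons. Qed.

Lemma eval_word_cat w1 w2 : eval_word (w1 ++ w2) = eval_word w1 * eval_word w2.
Proof. exact: big_cat. Qed.

Lemma eval_poly_cat p q : eval_poly (p ++ q) = eval_poly p + eval_poly q.
Proof. exact: big_cat. Qed.

Lemma eval_poly_flatten ps : eval_poly (flatten ps) = \sum_(p <- ps) eval_poly p.
Proof. by rewrite /eval_poly big_flatten. Qed.

Lemma eval_scale_poly c p : eval_poly (scale_poly c p) = eval_poly p *~ c.
Proof.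
rewrite /eval_poly big_map mulrz_suml; apply: eq_bigr => m _.
by rewrite mulrC mulrzA.
Qed.

Lemma eval_poly_cons l p :
  eval_poly [seq (m.1, l :: m.2) | m <- p] = eval_letter l * eval_poly p.
Proof.
rewrite /eval_poly big_map mulr_sumr; apply: eq_bigr => m _.
by rewrite eval_word_cons mulrzAr.
Qed.

Lemma eval_mul_poly p q : eval_poly (mul_poly p q) = eval_poly p * eval_poly q.
Proof.
rewrite /eval_poly big_allpairs_dep mulr_suml; apply: eq_bigr => m1 _.
rewrite mulr_sumr; apply: eq_bigr => m2 _.
by rewrite eval_word_cat mulrzAl mulrzAr mulrC mulrzA.
Qed.

Lemma eval_poly_of_expr e : eval_poly (poly_of_expr e) = eval_expr e.
Proof.
elim: e => [l|z|a IHa b IHb|a IHa|a IHa n|a IHa b IHb] /=.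
- by rewrite /eval_poly /eval_word !big_seq1 mulr1z.
- by rewrite /eval_poly /eval_word !big_seq1 big_nil.
- by rewrite eval_poly_cat IHa IHb.
- by rewrite eval_scale_poly IHa mulrN1z.
- by rewrite eval_scale_poly IHa.
- by rewrite eval_mul_poly IHa IHb.
Qed.

Lemma eval_add_monomial m p :
  eval_poly (add_monomial m p) = eval_word m.2 *~ m.1 + eval_poly p.
Proof.
rewrite /eval_poly; elim: p => [|m' p IH] /=; first by rewrite big_seq1 big_nil addr0.
case: eqP => [eq_w|_]; rewrite !big_cons //=.
  by rewrite eq_w mulrzDr addrA.
by rewrite IH addrCA.
Qed.

Lemma eval_collect p : eval_poly (foldr add_monomial [::] p) = eval_poly p.
Proof.
elim: p => [|m p IH] /=; first by [].
by rewrite eval_add_monomial IH /eval_poly big_cons.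
Qed.

Lemma eval_drop_zero p : eval_poly [seq m <- p | m.1 != 0] = eval_poly p.
Proof.
rewrite /eval_poly big_filter big_mkcond; apply: eq_bigr => m _.
by case: eqP => // ->; rewrite mulr0z.
Qed.

Hypotheses (hHE : commr H E = E *+ 2) (hHF : commr H F = - (F *+ 2))
  (hEF : commr E F = H).

Lemma eval_straighten {x y w q} : straighten x y w = Some q ->
  eval_poly q = eval_letter x * (eval_letter y * eval_word w).
Proof.
have eHF : H * F = F * H - F *+ 2 by rewrite -hHF addrC subrK.
have eEF : E * F = F * E + H by rewrite -hEF addrC subrK.
have eEH : E * H = H * E - E *+ 2 by rewrite -hHE opprB addrC subrK.
rewrite /eval_poly /eval_word.
case: x; case: y => //= -[<-]; rewrite !big_cons big_nil /= !mulrA.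
all: rewrite ?(eHF, eEF, eEH) addr0 mulr1z ?mulrNz ?mulrBl ?mulrDl ?mulrnAl //.
Qed.

Lemma eval_straighten_step {w q} : straighten_step w = Some q -> eval_poly q = eval_word w.
Proof.
elim: w q => [|x [|y w] IH] q //=.
rewrite -[X in omap _ X]/(straighten_step (y :: w)).
case straighten_xy: (straighten x y w) => [q'|].
  by move=> [<-]; rewrite (eval_straighten straighten_xy) !eval_word_cons.
case step_yw: (straighten_step _) => [q'|] //= [<-].
by rewrite eval_poly_cons (IH _ step_yw) [RHS]eval_word_cons.
Qed.

Lemma eval_normal_word n w : eval_poly (normal_word n w) = eval_word w.
Proof.
have eval_unit w' : eval_poly [:: (1, w')] = eval_word w' by rewrite /eval_poly big_seq1.
elim: n w => [|n IH] w /=; first exact: eval_unit.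
case step_w: (straighten_step w) => [q|]; last exact: eval_unit.
rewrite -(eval_straighten_step step_w) eval_poly_flatten big_map.
by apply: eq_bigr => m _; rewrite eval_scale_poly IH.
Qed.

Lemma eval_normal_poly n p : eval_poly (normal_poly n p) = eval_poly p.
Proof.
rewrite /normal_poly eval_drop_zero eval_collect eval_poly_flatten big_map.
by apply: eq_bigr => m _; rewrite eval_scale_poly eval_normal_word.
Qed.

Lemma sl2_expr_eq e1 e2 : normal_poly 60 (poly_of_expr (XAdd e1 (XOpp e2))) = [::] ->
  eval_expr e1 = eval_expr e2.
Proof.
move=> nf0; apply/eqP; rewrite -subr_eq0; apply/eqP.
by rewrite -[_ - _]/(eval_expr (XAdd e1 (XOpp e2))) -eval_poly_of_expr
  -(eval_normal_poly 60) nf0 /eval_poly big_nil.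
Qed.

End Sl2Normalisation.

Ltac reify_sl2 E F H t :=
  lazymatch t with
  | E => constr:(XLetter LE)
  | F => constr:(XLetter LF)
  | H => constr:(XLetter LH)
  | ?a + ?b =>
      let x := reify_sl2 E F H a in let y := reify_sl2 E F H b in constr:(XAdd x y)
  | - ?a => let x := reify_sl2 E F H a in constr:(XOpp x)
  | ?a * ?b =>
      let x := reify_sl2 E F H a in let y := reify_sl2 E F H b in constr:(XMul x y)
  | ?a ^+ 2 => let x := reify_sl2 E F H a in constr:(XMul x x)
  | ?a *+ ?n => let x := reify_sl2 E F H a in constr:(XMuln x n)
  | 0 => constr:(XConst 0)
  | 1 => constr:(XConst 1)
  | ?n%:R => constr:(XConst (Posz n))
  end.

Ltac sl2_ring E F H hHE hHF hEF :=
  lazymatch goal with |- ?l = ?r =>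
    let x := reify_sl2 E F H l in let y := reify_sl2 E F H r in
    change (@eval_expr _ E F H x = @eval_expr _ E F H y);
    apply: (@sl2_expr_eq _ E F H hHE hHF hEF); vm_compute; reflexivity
  end.

Definition sharpA {R : pzRingType} (E F : R) : R := (E + F) ^+ 2 - 4.
Definition sharpB {R : pzRingType} (H : R) : R := H ^+ 2 - 4.
Definition sharpC {R : pzRingType} (E F : R) : R := - (E - F) ^+ 2 - 4.
Definition sharpD {R : pzRingType} (E F H : R) : R :=
  (H + 2) * F ^+ 2 - (H - 2) * E ^+ 2.

Section Sl2RacahIdentities.
Variables (R : pzRingType) (E F H : R).
Hypotheses (hHE : commr H E = E *+ 2) (hHF : commr H F = - (F *+ 2))
  (hEF : commr E F = H).

Local Notation a := (sharpA E F).
Local Notation b := (sharpB H).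
Local Notation c := (sharpC E F).
Local Notation d := (sharpD E F H).

Ltac sl2_sharp :=
  rewrite /commr /sharpA /sharpB /sharpC /sharpD; sl2_ring E F H hHE hHF hEF.

Lemma commr_sharpAB : commr a b = d *+ 8. Proof. sl2_sharp. Qed.
Lemma commr_sharpBC : commr b c = d *+ 8. Proof. sl2_sharp. Qed.
Lemma commr_sharpCA : commr c a = d *+ 8. Proof. sl2_sharp. Qed.
Lemma commr_sharpAD : commr a d = (b * a - a * c) *+ 4. Proof. sl2_sharp. Qed.
Lemma commr_sharpBD : commr b d = (c * b - b * a) *+ 4. Proof. sl2_sharp. Qed.
Lemma commr_sharpCD : commr c d = (a * c - c * b) *+ 4. Proof. sl2_sharp. Qed.
Lemma sharpABC : a + b + c = (E * F + F * E) *+ 2 + H ^+ 2 - 12. Proof. sl2_sharp. Qed.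

End Sl2RacahIdentities.

Lemma mulrZZ (K : pzRingType) (T : algType K) (k l : K) (x y : T) :
  (k *: x) * (l *: y) = (k * l) *: (x * y).
Proof. by rewrite -scalerAl -scalerAr scalerA. Qed.

Lemma commrZZ (K : comPzRingType) (T : algType K) (k l : K) (x y : T) :
  commr (k *: x) (l *: y) = (k * l) *: commr x y.
Proof. by rewrite /commr !mulrZZ [l * k]mulrC scalerBr. Qed.

Section Rescaling.
Variables (K : numFieldType) (T : algType K).

Lemma commr_rescaled (x y z : T) : commr x y = z *+ 8 ->
  commr (16^-1 *: x) (16^-1 *: y) = (64^-1 *: z) *+ 2.
Proof.
move=> xy; rewrite commrZZ xy -scalerMnr !scalerMnl.
by congr (_ *: _); field.
Qed.

Lemma racah_alpha_rescaled (a b c d : T) : commr a d = (b * a - a * c) *+ 4 ->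
  racah_alpha (16^-1 *: a) (16^-1 *: b) (16^-1 *: c) (64^-1 *: d) = 0.
Proof.
move=> ad; rewrite /racah_alpha commrZZ ad !mulrZZ -addrA -scalerBr.
rewrite -[a * c - b * a]opprB scalerN -scalerMnr scalerMnl -scalerBl.
by rewrite [X in X *: _](_ : _ = 0) ?scale0r //; field.
Qed.

End Rescaling.

Lemma racah_betaE (R : pzRingType) (a b c d : R) :
  racah_beta a b c d = racah_alpha b c a d.
Proof. by []. Qed.

Lemma racah_gammaE (R : pzRingType) (a b c d : R) :
  racah_gamma a b c d = racah_alpha c a b d.
Proof. by []. Qed.

Lemma lrmorph_racah_alpha (K : pzRingType) (R S : lalgType K) (f : {lrmorphism R -> S})
    (a b c d : R) :
  f (racah_alpha a b c d) = racah_alpha (f a) (f b) (f c) (f d).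
Proof. by rewrite /racah_alpha /commr !(rmorphB, rmorphD, rmorphM). Qed.

Lemma lrmorph_racah_delta (K : pzRingType) (R S : lalgType K) (f : {lrmorphism R -> S})
    (a b c d : R) :
  f (racah_delta a b c d) = racah_delta (f a) (f b) (f c) (f d).
Proof. by rewrite /racah_delta !rmorphD. Qed.

Lemma comm_gens0 (R : pzRingType) (a b c d : R) : comm_gens 0 a b c d.
Proof. by split; rewrite /commr mul0r mulr0 subrr. Qed.

Lemma racah_rel_rescaled (T : algType Cx) (a b c d : T) :
    commr a b = d *+ 8 -> commr b c = d *+ 8 -> commr c a = d *+ 8 ->
    commr a d = (b * a - a * c) *+ 4 -> commr b d = (c * b - b * a) *+ 4 ->
    commr c d = (a * c - c * b) *+ 4 ->
  racah_rel (16^-1 *: a) (16^-1 *: b) (16^-1 *: c) (64^-1 *: d).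
Proof.
move=> ab bc ca ad bd cd; split; first by split; apply: commr_rescaled.
by rewrite racah_betaE racah_gammaE !racah_alpha_rescaled //; split; apply: comm_gens0.
Qed.

Lemma mulr_subn_addn (R : pzRingType) (x : R) (n : nat) :
  (x - n%:R) * (x + n%:R) = x ^+ 2 - (n ^ 2)%:R.
Proof. by rewrite mulrBl !mulrDr (commr_nat x n) addrKA natrX !expr2. Qed.

Lemma sqrrZi (U : algType Cx) (x : U) : ('i *: x) ^+ 2 = - x ^+ 2.
Proof. by rewrite exprZn sqr_i scaleN1r. Qed.

Lemma Casimir_mul2 (U : algType Cx) (E F H : U) :
  Casimir E F H *+ 2 = (E * F + F * E) *+ 2 + H ^+ 2.
Proof.
rewrite /Casimir mulrnDl scalerMnl [(2^-1 : Cx) *+ 2](_ : _ = 1) ?scale1r //.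
by field.
Qed.

Lemma Casimir_rescaled (U : algType Cx) (E F H : U) :
  16^-1 *: ((E * F + F * E) *+ 2 + H ^+ 2 - 12) = 8^-1 *: (Casimir E F H - 6).
Proof.
have twelve : 12 = 6 *+ 2 :> U by rewrite -mulrnA.
rewrite -Casimir_mul2 twelve -mulrnBl -scalerMnr scalerMnl.
by congr (_ *: _); field.
Qed.

Theorem theorem1p3
  (Re : algType Cx) (A B C D : Re) (HRe : is_Racah A B C D)
  (U : algType Cx) (E F H : U) (HU : is_Usl2 E F H) :
  exists sharp : {lrmorphism Re -> U},
    unique_hom_on (fun g =>
      [/\ g A = (16^-1 : Cx) *: ((E + F - 2) * (E + F + 2)),
          g B = (16^-1 : Cx) *: ((H - 2) * (H + 2)),
          g C = (16^-1 : Cx) *: (('i *: E - 'i *: F - 2) * ('i *: E - 'i *: F + 2))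
        & g D = (64^-1 : Cx) *: ((H + 2) * F ^+ 2 - (H - 2) * E ^+ 2)]) sharp
    /\ sharp (racah_alpha A B C D) = 0
    /\ sharp (racah_beta A B C D) = 0
    /\ sharp (racah_gamma A B C D) = 0
    /\ sharp (racah_delta A B C D) = (8^-1 : Cx) *: (Casimir E F H - 6).
Proof.
case: HU => [[hHE hHF hEF] _].
have eA : (E + F - 2) * (E + F + 2) = sharpA E F by rewrite mulr_subn_addn.
have eB : (H - 2) * (H + 2) = sharpB H by rewrite mulr_subn_addn.
have eC : ('i *: E - 'i *: F - 2) * ('i *: E - 'i *: F + 2) = sharpC E F.
  by rewrite -scalerBr mulr_subn_addn sqrrZi.
rewrite eA eB eC -/(sharpD E F H).
have AD := commr_sharpAD hHE hHF hEF; have BD := commr_sharpBD hHE hHF hEF.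
have CD := commr_sharpCD hHE hHF hEF.
have rel := racah_rel_rescaled (commr_sharpAB hHE hHF hEF) (commr_sharpBC hHE hHF hEF)
  (commr_sharpCA hHE hHF hEF) AD BD CD.
case: HRe => _ /(_ U _ _ _ _ rel) [sharp [images sharp_unique]].
exists sharp; split; first by split.
rewrite racah_betaE racah_gammaE !lrmorph_racah_alpha lrmorph_racah_delta.
case: images => -> -> -> ->.
rewrite !racah_alpha_rescaled // /racah_delta -!scalerDr.
by rewrite (sharpABC hHE hHF hEF) Casimir_rescaled.
Qed.
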